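(* For every integer $r\ge0$, $$D^r(\delta)(\tau)=\frac{1}{24^r}\left(-\tfrac32\right)^{\overline r}e\!\left(-\frac{x}{24}\right)\left(\frac{\pi y}{6}\right)^{\frac14-\frac r2}M_{\frac14-\frac r2,\frac34-\frac r2}\!\left(\frac{\pi y}{6}\right).$$
   Context: $\tau=x+iy\in\mathbb H$, $e(w)=e^{2\pi iw}$, $M_{\kappa,\mu}$ is the Whittaker $M$-function, $(x)^{\overline r}$ is the rising factorial, $\delta(\tau):=e(-\frac{x}{24})(\frac{\pi y}{6})^{1/4}M_{\frac14,\frac34}(\frac{\pi y}{6})$, and on smooth functions $D:=\frac{1}{2\pi i}\cdot\frac12\left(\frac{\partial}{\partial x}-i\frac{\partial}{\partial y}\right)$ (which equals $\frac{1}{2\pi i}\frac{d}{d\tau}$ on holomorphic functions). *)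

From Stdlib Require Import Reals Factorial.
From Coquelicot Require Import Coquelicot.
Open Scope R_scope.

Fixpoint rising (a : R) (n : nat) : R :=
  match n with O => 1 | S m => rising a m * (a + INR m) end.

(* Kummer's confluent hypergeometric function 1F1(a;b;z) = sum_n (a)_n/((b)_n n!) z^n
   (b not a non-positive integer). *)
Definition Kummer1F1 (a b z : R) : R :=
  Series (fun n => rising a n / (rising b n * INR (fact n)) * z ^ n).

(* Whittaker M-function (DLMF 13.14.2) for real parameters and real z > 0:
   M_{kappa,mu}(z) = e^{-z/2} z^{mu+1/2} 1F1(mu-kappa+1/2; 1+2mu; z). *)
Definition WhittakerM (kappa mu z : R) : R :=
  exp (- z / 2) * Rpower z (mu + 1/2) * Kummer1F1 (mu - kappa + 1/2) (1 + 2 * mu) z.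

Definition e (w : R) : C := (cos (2 * PI * w), sin (2 * PI * w)).

(* Complex-valued functions of tau = x + i y, written as functions of (x, y). *)
Definition cfun := R -> R -> C.

Definition dx (f : cfun) : cfun := fun x y =>
  (Derive (fun t => fst (f t y)) x, Derive (fun t => snd (f t y)) x).
Definition dy (f : cfun) : cfun := fun x y =>
  (Derive (fun t => fst (f x t)) y, Derive (fun t => snd (f x t)) y).

Definition Dop (f : cfun) : cfun := fun x y =>
  Cmult (Cinv (Cmult (RtoC (2 * PI)) Ci))
        (Cmult (RtoC (1/2)) (Cminus (dx f x y) (Cmult Ci (dy f x y)))).

Definition Dpow (r : nat) (f : cfun) : cfun := Nat.iter r Dop f.

Definition delta : cfun := fun x y =>
  Cmult (e (- x / 24))
        (RtoC (Rpower (PI * y / 6) (1/4) * WhittakerM (1/4) (3/4) (PI * y / 6))).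

From Stdlib Require Import Reals Lra Lia Factorial.
From Coquelicot Require Import Coquelicot.
Open Scope R_scope.

(* A function of the form e(c x) A(y) is mapped by D to e(c x) (c A/2 - A'/(4 pi)), so
   every D^r delta has this shape and only its y-profile evolves.  Since kappa - mu = -1/2,
   the profile z^kappa M_{kappa,mu}(z) equals e^{-z/2} z^p 1F1(1; p+1; z) with p = 3/2 - r,
   and the contiguous relation d/dz (z^p 1F1(a; p+1; z)) = p z^(p-1) 1F1(a; p; z) shows that
   the derivative of this profile is -1/2 times itself plus p times the next profile.  With
   z = pi y/6 the first part cancels the term c A/2 = -A/48 exactly, and the second part
   contributes the factor -(3/2 - r)/24 = (-3/2 + r)/24, which builds up the rising
   factorial. *)

Lemma rising_S_shift (p : R) (n : nat) : rising p (S n) = p * rising (p + 1) n.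
Proof.
  induction n as [|n IH]; [simpl; ring|].
  change (rising p (S (S n))) with (rising p (S n) * (p + INR (S n))).
  rewrite IH, S_INR; simpl; ring.
Qed.

Lemma rising_neq0 (p : R) (n : nat) : (forall k, p + INR k <> 0) -> rising p n <> 0.
Proof.
  intros Hp; induction n as [|n IH]; simpl; [lra|].
  now apply Rmult_integral_contrapositive.
Qed.

Lemma plus_INR_S_neq0 (p : R) : (forall k, p + INR k <> 0) -> forall k, p + 1 + INR k <> 0.
Proof. intros Hp k; rewrite Rplus_assoc, Rplus_comm with (r1 := 1), <- S_INR; apply Hp. Qed.

Definition kummer_coef (a b : R) (n : nat) : R := rising a n / (rising b n * INR (fact n)).

Lemma Kummer1F1_PSeries (a b z : R) : Kummer1F1 a b z = PSeries (kummer_coef a b) z.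
Proof. reflexivity. Qed.

Section KummerSeries.

Variables a b : R.
Hypothesis Ha : forall k, a + INR k <> 0.
Hypothesis Hb : forall k, b + INR k <> 0.

Lemma kummer_coef_neq0 (n : nat) : kummer_coef a b n <> 0.
Proof.
  unfold kummer_coef, Rdiv.
  apply Rmult_integral_contrapositive; split; [now apply rising_neq0|].
  apply Rinv_neq_0_compat, Rmult_integral_contrapositive.
  split; [now apply rising_neq0|apply INR_fact_neq_0].
Qed.

Lemma kummer_coef_ratio (n : nat) :
  kummer_coef a b (S n) / kummer_coef a b n = (a + INR n) / (b + INR n) * / (INR n + 1).
Proof.
  unfold kummer_coef.
  change (rising a (S n)) with (rising a n * (a + INR n)).
  change (rising b (S n)) with (rising b n * (b + INR n)).
  pose proof (rising_neq0 a n Ha); pose proof (rising_neq0 b n Hb).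
  pose proof (INR_fact_neq_0 n); pose proof (Ha n); pose proof (Hb n).
  pose proof (pos_INR n).
  rewrite fact_simpl, mult_INR, S_INR; field; repeat split; auto; lra.
Qed.

Lemma CV_radius_kummer_coef : CV_radius (kummer_coef a b) = p_infty.
Proof.
  apply CV_radius_infinite_DAlembert; [apply kummer_coef_neq0|].
  apply is_lim_seq_ext with (fun n => Rabs ((a + INR n) / (b + INR n) * / (INR n + 1))).
  { intros n; now rewrite kummer_coef_ratio. }
  rewrite <- Rabs_R0.
  apply is_lim_seq_abs with (l := Finite 0).
  replace (Finite 0) with (Finite (1 * 0)) by (f_equal; ring).
  apply is_lim_seq_mult'.
  - apply is_lim_seq_ext with (fun n => 1 + (a - b) * / (b + INR n)).
    { intros n; field; apply Hb. }
    replace (Finite 1) with (Finite (1 + (a - b) * 0)) by (f_equal; ring).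
    apply is_lim_seq_plus'; [apply is_lim_seq_const|].
    apply is_lim_seq_mult'; [apply is_lim_seq_const|].
    replace (Finite 0) with (Rbar_inv p_infty) by reflexivity.
    apply is_lim_seq_inv; [|discriminate].
    eapply is_lim_seq_plus; [apply is_lim_seq_const|apply is_lim_seq_INR|constructor].
  - replace (Finite 0) with (Rbar_inv p_infty) by reflexivity.
    apply is_lim_seq_inv; [|discriminate].
    eapply is_lim_seq_plus; [apply is_lim_seq_INR|apply is_lim_seq_const|constructor].
Qed.

End KummerSeries.

Section KummerContiguous.

Variables a p : R.
Hypothesis Ha : forall k, a + INR k <> 0.
Hypothesis Hp : forall k, p + INR k <> 0.

Lemma kummer_coef_contiguous (n : nat) :
  p * kummer_coef a (p + 1) n + INR n * kummer_coef a (p + 1) n = p * kummer_coef a p n.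
Proof.
  unfold kummer_coef.
  assert (Hshift : rising (p + 1) n = rising p (S n) / p).
  { rewrite rising_S_shift; field; generalize (Hp 0%nat); simpl; lra. }
  rewrite Hshift; change (rising p (S n)) with (rising p n * (p + INR n)).
  pose proof (rising_neq0 a n Ha); pose proof (rising_neq0 p n Hp).
  pose proof (INR_fact_neq_0 n); pose proof (Hp n); pose proof (Hp 0%nat).
  simpl INR in *; field; repeat split; auto; lra.
Qed.

Lemma PSeries_kummer_contiguous (z : R) :
  p * PSeries (kummer_coef a (p + 1)) z + z * PSeries (PS_derive (kummer_coef a (p + 1))) z
  = p * PSeries (kummer_coef a p) z.
Proof.
  set (c := kummer_coef a (p + 1)).
  assert (Hc : CV_radius c = p_infty) by apply (CV_radius_kummer_coef _ _ Ha (plus_INR_S_neq0 _ Hp)).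
  assert (Hz : Rbar_lt (Rabs z) (CV_radius c)) by now rewrite Hc.
  rewrite <- PSeries_incr_1, <- !PSeries_scal, <- PSeries_plus.
  - apply PSeries_ext; intros n.
    unfold PS_plus, PS_scal, PS_incr_1, PS_derive, plus, scal; simpl.
    rewrite <- kummer_coef_contiguous; destruct n as [|m]; simpl; fold c.
    + change (p * c 0%nat + 0 = p * c 0%nat + 0 * c 0%nat); ring.
    + reflexivity.
  - apply ex_pseries_scal; [apply Rmult_comm|]; now apply CV_radius_inside.
  - apply ex_pseries_incr_1, CV_radius_inside; now rewrite CV_radius_derive.
Qed.

Lemma is_derive_Rpower_Kummer1F1 (z : R) : 0 < z ->
  is_derive (fun t => Rpower t p * Kummer1F1 a (p + 1) t) z
            (p * Rpower z (p - 1) * Kummer1F1 a p z).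
Proof.
  intros hz.
  set (c := kummer_coef a (p + 1)).
  assert (Hc : CV_radius c = p_infty) by apply (CV_radius_kummer_coef _ _ Ha (plus_INR_S_neq0 _ Hp)).
  assert (Dpow : is_derive (fun t => Rpower t p) z (p * Rpower z (p - 1))).
  { apply is_derive_Reals, derivable_pt_lim_power, hz. }
  assert (DF : is_derive (PSeries c) z (PSeries (PS_derive c) z)).
  { apply is_derive_PSeries; now rewrite Hc. }
  replace (p * Rpower z (p - 1) * Kummer1F1 a p z)
    with (p * Rpower z (p - 1) * PSeries c z + Rpower z p * PSeries (PS_derive c) z).
  { exact (is_derive_mult _ _ _ _ _ Dpow DF Rmult_comm). }
  replace (Rpower z p) with (Rpower z (p - 1) * z)
    by (rewrite <- (Rpower_1 z) at 2 by exact hz; rewrite <- Rpower_plus; f_equal; ring).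
  rewrite Kummer1F1_PSeries.
  transitivity (Rpower z (p - 1) * (p * PSeries (kummer_coef a p) z)); [|ring].
  rewrite <- PSeries_kummer_contiguous; fold c; ring.
Qed.

End KummerContiguous.

Lemma Rpower_mul_WhittakerM (kappa mu z : R) :
  Rpower z kappa * WhittakerM kappa mu z
  = exp (- z / 2) * (Rpower z (kappa + mu + 1/2) * Kummer1F1 (mu - kappa + 1/2) (1 + 2 * mu) z).
Proof.
  unfold WhittakerM; rewrite Rplus_assoc, (Rpower_plus kappa (mu + 1/2)); ring.
Qed.

Definition shifted_whittaker (r : nat) (z : R) : R :=
  Rpower z (1/4 - INR r / 2) * WhittakerM (1/4 - INR r / 2) (3/4 - INR r / 2) z.

Lemma shifted_whittaker_Kummer1F1 (r : nat) (z : R) :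
  shifted_whittaker r z
  = exp (- z / 2) * (Rpower z (3/2 - INR r) * Kummer1F1 1 (5/2 - INR r) z).
Proof.
  unfold shifted_whittaker; rewrite Rpower_mul_WhittakerM.
  do 3 f_equal; lra.
Qed.

Lemma three_halves_minus_nat_neq0 (r k : nat) : 3/2 - INR r + INR k <> 0.
Proof.
  rewrite !INR_IZR_INZ; intros H.
  assert (H3 : IZR 3 = IZR (2 * (Z.of_nat r - Z.of_nat k))) by (rewrite mult_IZR, minus_IZR; lra).
  apply eq_IZR in H3; lia.
Qed.

Lemma is_derive_shifted_whittaker (r : nat) (z : R) : 0 < z ->
  is_derive (shifted_whittaker r) z
            (- shifted_whittaker r z / 2 + (3/2 - INR r) * shifted_whittaker (S r) z).
Proof.
  intros hz; set (p := 3/2 - INR r).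
  assert (Hp : forall k, p + INR k <> 0) by apply three_halves_minus_nat_neq0.
  assert (Hone : forall k, 1 + INR k <> 0) by (intros k; generalize (pos_INR k); lra).
  assert (Hshift : forall t, shifted_whittaker r t
                             = exp (- t / 2) * (Rpower t p * Kummer1F1 1 (p + 1) t)).
  { intros t; rewrite shifted_whittaker_Kummer1F1.
    now replace (5/2 - INR r) with (p + 1) by (unfold p; lra). }
  assert (HS : shifted_whittaker (S r) z = exp (- z / 2) * (Rpower z (p - 1) * Kummer1F1 1 p z)).
  { rewrite shifted_whittaker_Kummer1F1, S_INR.
    replace (3/2 - (INR r + 1)) with (p - 1) by (unfold p; lra).
    now replace (5/2 - (INR r + 1)) with p by (unfold p; lra). }
  assert (Dexp : is_derive (fun t => exp (- t / 2)) z (- exp (- z / 2) / 2)).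
  { auto_derive; auto; unfold Rdiv; ring. }
  pose proof (is_derive_mult _ _ _ _ _ Dexp (is_derive_Rpower_Kummer1F1 1 p Hone Hp z hz) Rmult_comm)
    as Dprod.
  eapply is_derive_ext; [intros t; symmetry; apply Hshift|].
  rewrite HS, Hshift.
  replace (- (exp (- z / 2) * (Rpower z p * Kummer1F1 1 (p + 1) z)) / 2 +
           p * (exp (- z / 2) * (Rpower z (p - 1) * Kummer1F1 1 p z)))
    with (- exp (- z / 2) / 2 * (Rpower z p * Kummer1F1 1 (p + 1) z) +
          exp (- z / 2) * (p * Rpower z (p - 1) * Kummer1F1 1 p z)) by (unfold Rdiv; ring).
  exact Dprod.
Qed.

Lemma Dop_separable (c : R) (f : cfun) (A : R -> R) (x y Ad : R) : 0 < y ->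
  (forall x' y', 0 < y' -> f x' y' = Cmult (e (c * x')) (RtoC (A y'))) ->
  is_derive A y Ad ->
  Dop f x y = Cmult (e (c * x)) (RtoC (c * A y / 2 - Ad / (4 * PI))).
Proof.
  intros hy hf hA; unfold Dop, dx, dy.
  set (th := fun t => 2 * PI * (c * t)).
  assert (near_y : locally y (fun t => 0 < t)).
  { apply (locally_interval _ y 0 p_infty); simpl; auto. }
  assert (Ex_re : Derive (fun t => fst (f t y)) x = - (2 * PI * c) * sin (th x) * A y).
  { rewrite (Derive_ext _ (fun t => cos (th t) * A y - sin (th t) * 0))
      by (intros t; now rewrite hf).
    apply is_derive_unique; unfold th; auto_derive; auto; ring. }
  assert (Ex_im : Derive (fun t => snd (f t y)) x = 2 * PI * c * cos (th x) * A y).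
  { rewrite (Derive_ext _ (fun t => cos (th t) * 0 + sin (th t) * A y))
      by (intros t; now rewrite hf).
    apply is_derive_unique; unfold th; auto_derive; auto; ring. }
  assert (Ey_re : Derive (fun t => fst (f x t)) y = cos (th x) * Ad).
  { rewrite (Derive_ext_loc _ (fun t => cos (th x) * A t)).
    - apply is_derive_unique, is_derive_scal, hA.
    - eapply filter_imp; [|exact near_y]; intros t ht; rewrite hf by exact ht; simpl; unfold th; ring. }
  assert (Ey_im : Derive (fun t => snd (f x t)) y = sin (th x) * Ad).
  { rewrite (Derive_ext_loc _ (fun t => sin (th x) * A t)).
    - apply is_derive_unique, is_derive_scal, hA.
    - eapply filter_imp; [|exact near_y]; intros t ht; rewrite hf by exact ht; simpl; unfold th; ring. }
  rewrite Ex_re, Ex_im, Ey_re, Ey_im; unfold e; fold (th x).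
  assert (PI <> 0) by (generalize PI_RGT_0; lra).
  unfold Cinv, Cmult, Cminus, Cplus, Copp, Ci, RtoC; simpl.
  f_equal; field; auto.
Qed.

Definition delta_coef (r : nat) : R := / 24 ^ r * rising (- 3 / 2) r.

Lemma delta_coef_S (r : nat) : delta_coef (S r) = - (3/2 - INR r) / 24 * delta_coef r.
Proof. unfold delta_coef; simpl; field; apply pow_nonzero; lra. Qed.

Lemma Dpow_delta (r : nat) (x y : R) : 0 < y ->
  Dpow r delta x y
  = Cmult (e (- / 24 * x)) (RtoC (delta_coef r * shifted_whittaker r (PI * y / 6))).
Proof.
  revert x y; induction r as [|r IH]; intros x y hy.
  - unfold delta, delta_coef, shifted_whittaker; simpl.
    replace (- x / 24) with (- / 24 * x) by field.
    replace (1/4 - 0/2) with (1/4) by field; replace (3/4 - 0/2) with (3/4) by field.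
    now rewrite Rinv_1, !Rmult_1_l.
  - assert (Dw : is_derive (fun t => delta_coef r * shifted_whittaker r (PI * t / 6)) y
                   (delta_coef r * (PI / 6 *
                      (- shifted_whittaker r (PI * y / 6) / 2
                       + (3/2 - INR r) * shifted_whittaker (S r) (PI * y / 6))))).
    { apply is_derive_scal.
      apply (is_derive_comp (shifted_whittaker r) (fun t => PI * t / 6)).
      - apply is_derive_shifted_whittaker; generalize PI_RGT_0; intros; nra.
      - auto_derive; auto; field. }
    change (Dpow (S r) delta x y) with (Dop (Dpow r delta) x y).
    rewrite (Dop_separable _ _ _ x y _ hy IH Dw), delta_coef_S.
    do 2 f_equal; assert (PI <> 0) by (generalize PI_RGT_0; lra); field; auto.
Qed.

Theorem mainTheorem9 (r : nat) (x y : R) (hy : 0 < y) :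
  Dpow r delta x y =
  Cmult (RtoC (/ 24 ^ r * rising (- 3 / 2) r))
    (Cmult (e (- x / 24))
       (RtoC (Rpower (PI * y / 6) (1/4 - INR r / 2) *
              WhittakerM (1/4 - INR r / 2) (3/4 - INR r / 2) (PI * y / 6)))).
Proof.
  rewrite Dpow_delta by exact hy.
  replace (- x / 24) with (- / 24 * x) by field.
  fold (delta_coef r) (shifted_whittaker r (PI * y / 6)).
  unfold Cmult, RtoC; simpl; f_equal; ring.
Qed.
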